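(* Let $M,N$ be complete pointed metric spaces and $f\colon M\to N$ a Lipschitz map with $f(0_M)=0_N$. Suppose: $(P_1)$ for every bounded $S\subset M$, $f(S)$ is totally bounded in $N$; $(P_2)$ $\displaystyle\lim_{d(x,y)\to0}\frac{d(f(x),f(y))}{d(x,y)}=0$ (uniform local flatness); $(P_4)$ $f$ is flat at infinity: $\displaystyle\lim_{d(x,0_M)\to\infty,\ d(y,0_M)\to\infty}\frac{d(f(x),f(y))}{d(x,y)}=0$ (limit over pairs $x\neq y$), i.e. for every $\varepsilon>0$ there is $R>0$ such that $d(f(x),f(y))\le\varepsilon d(x,y)$ whenever $x\neq y$ and $d(x,0_M),d(y,0_M)\ge R$. Then $\widehat f\colon\mathcal F(M)\to\mathcal F(N)$ is compact.
   Context: Scalars are $\mathbb K=\mathbb R$ or $\mathbb C$. For a pointed metric space $(M,d,0_M)$, $\mathrm{Lip}_0(M)$ denotes the Banach space of Lipschitz functions $g\colon M\to\mathbb K$ with $g(0_M)=0$ normed by the best Lipschitz constant; $\delta(x)\in\mathrm{Lip}_0(M)^*$ is evaluation at $x$; the Lipschitz-free space $\mathcal F(M)$ is the norm-closed linear span of $\{\delta(x):x\in M\}$ in $\mathrm{Lip}_0(M)^*$. For a Lipschitz map $f\colon M\to N$ with $f(0_M)=0_N$, $\widehat f\colon\mathcal F(M)\to\mathcal F(N)$ is the unique bounded linear operator with $\widehat f(\delta(x))=\delta(f(x))$ for all $x\in M$. *)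

From Stdlib Require Import Reals List.
From Coquelicot Require Import Coquelicot Complex.
Open Scope R_scope.

Definition is_metric {X : Type} (d : X -> X -> R) : Prop :=
  (forall x y, 0 <= d x y) /\
  (forall x y, d x y = 0 <-> x = y) /\
  (forall x y, d x y = d y x) /\
  (forall x y z, d x z <= d x y + d y z).

Definition is_complete {X : Type} (d : X -> X -> R) : Prop :=
  forall u : nat -> X,
    (forall eps, 0 < eps -> exists N, forall m n, (N <= m)%nat -> (N <= n)%nat -> d (u m) (u n) < eps) ->
    exists l, forall eps, 0 < eps -> exists N, forall n, (N <= n)%nat -> d (u n) l < eps.

Definition lipschitz_map {X Y : Type} (dX : X -> X -> R) (dY : Y -> Y -> R) (f : X -> Y) : Prop :=
  exists L, forall x y, dY (f x) (f y) <= L * dX x y.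

Definition lip_le {K : AbsRing} {X : Type} (d : X -> X -> R) (g : X -> K) (L : R) : Prop :=
  forall x y, abs (minus (g x) (g y)) <= L * d x y.

Definition Lip0 {K : AbsRing} {X : Type} (d : X -> X -> R) (x0 : X) (g : X -> K) : Prop :=
  g x0 = zero /\ exists L, lip_le d g L.

Definition Lip0_ball {K : AbsRing} {X : Type} (d : X -> X -> R) (x0 : X) (g : X -> K) : Prop :=
  g x0 = zero /\ lip_le d g 1.

(** Functionals on Lip_0(M) are represented as maps (X -> K) -> K;
    only their values on Lip_0(M) matter. *)
Definition functional (K : AbsRing) (X : Type) := (X -> K) -> K.

Definition dnorm_le {K : AbsRing} {X : Type} (d : X -> X -> R) (x0 : X)
  (phi : functional K X) (c : R) : Prop :=
  forall g, Lip0_ball d x0 g -> abs (phi g) <= c.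

Definition in_dual {K : AbsRing} {X : Type} (d : X -> X -> R) (x0 : X) (phi : functional K X) : Prop :=
  (forall g h, Lip0 d x0 g -> Lip0 d x0 h -> phi (fun x => plus (g x) (h x)) = plus (phi g) (phi h)) /\
  (forall (a : K) g, Lip0 d x0 g -> phi (fun x => mult a (g x)) = mult a (phi g)) /\
  (exists C, dnorm_le d x0 phi C).

Definition delta {K : AbsRing} {X : Type} (x : X) : functional K X := fun g => g x.

Definition lincomb {K : AbsRing} {X : Type} (l : list (K * X)) : functional K X :=
  fun g => fold_right (fun p acc => plus (mult (fst p) (delta (snd p) g)) acc) zero l.

Definition fdiff {K : AbsRing} {X : Type} (phi psi : functional K X) : functional K X :=
  fun g => minus (phi g) (psi g).

(** The Lipschitz-free space F(M): norm-closed linear span of the delta(x) in Lip_0(M)^*. *)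
Definition in_free {K : AbsRing} {X : Type} (d : X -> X -> R) (x0 : X) (phi : functional K X) : Prop :=
  in_dual d x0 phi /\
  forall eps, 0 < eps -> exists l : list (K * X), dnorm_le d x0 (fdiff phi (lincomb l)) eps.

Definition feq {K : AbsRing} {X : Type} (d : X -> X -> R) (x0 : X) (phi psi : functional K X) : Prop :=
  forall g, Lip0 d x0 g -> phi g = psi g.

Definition bounded_linear_free {K : AbsRing} {X Y : Type}
  (dX : X -> X -> R) (x0 : X) (dY : Y -> Y -> R) (y0 : Y)
  (T : functional K X -> functional K Y) : Prop :=
  (forall phi, in_free dX x0 phi -> in_free dY y0 (T phi)) /\
  (forall (a : K) phi psi, in_free dX x0 phi -> in_free dX x0 psi ->
     feq dY y0 (T (fun g => plus (mult a (phi g)) (psi g)))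
               (fun g => plus (mult a (T phi g)) (T psi g))) /\
  (exists C, forall phi c, in_free dX x0 phi -> dnorm_le dX x0 phi c ->
     dnorm_le dY y0 (T phi) (C * c)).

Definition compact_operator {K : AbsRing} {X Y : Type}
  (dX : X -> X -> R) (x0 : X) (dY : Y -> Y -> R) (y0 : Y)
  (T : functional K X -> functional K Y) : Prop :=
  forall phi : nat -> functional K X,
    (forall n, in_free dX x0 (phi n) /\ dnorm_le dX x0 (phi n) 1) ->
    exists (sigma : nat -> nat) (psi : functional K Y),
      (forall n, (sigma n < sigma (S n))%nat) /\
      in_free dY y0 psi /\
      forall eps, 0 < eps -> exists N, forall k, (N <= k)%nat ->
        dnorm_le dY y0 (fdiff (T (phi (sigma k))) psi) eps.

(* Since [T phi g = phi (g o f)], compactness of [T] reduces to total boundedness, in the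
   Lipschitz norm of Lip_0(M), of the family of all [g o f] with [g] in the unit ball of
   Lip_0(N).  The difference [g o f - g' o f] has a small Lipschitz constant at short range
   by (P2) and near infinity by (P4); in between it is uniformly small on a large ball as
   soon as [g] and [g'] are close on a finite net of the image of that ball, given by (P1).
   Hence finitely many [g' o f] are Lipschitz-close to every [g o f].  A bounded sequence in
   F(M) then has, by pigeonhole and a diagonal argument, a subsequence converging uniformly
   on the family, i.e. whose image under [T] is Cauchy in F(N). *)

From Stdlib Require Import Reals List Lra Lia Classical ClassicalEpsilon FunctionalExtensionality.
From Coquelicot Require Import Coquelicot Complex.
Open Scope R_scope.

Section GroupAlgebra.
Context {G : AbelianGroup}.

Lemma plus_swap_middle (p q r s : G) : plus (plus p q) (plus r s) = plus (plus p r) (plus q s).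
Proof.
  rewrite <- !plus_assoc. f_equal. rewrite !plus_assoc. f_equal. apply plus_comm.
Qed.

Lemma minus_plus_distr (a b c d : G) : minus (plus a b) (plus c d) = plus (minus a c) (minus b d).
Proof. unfold minus at 1. rewrite opp_plus. apply plus_swap_middle. Qed.

Lemma plus_opp_minus (a b : G) : plus (opp a) b = minus b a.
Proof. apply plus_comm. Qed.

Lemma minus_eq_zero_eq (a b : G) : minus a b = zero -> a = b.
Proof.
  intros H. apply (plus_reg_r (opp b)). change (minus a b = minus b b).
  rewrite H. symmetry. apply minus_eq_zero.
Qed.

End GroupAlgebra.

Lemma mult_minus_distr_l {K : Ring} (a u v : K) : mult a (minus u v) = minus (mult a u) (mult a v).
Proof.
  change (mult a (plus u (opp v)) = plus (mult a u) (opp (mult a v))).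
  rewrite mult_distr_l, opp_mult_r. reflexivity.
Qed.

Section AbsRingFacts.
Context {K : AbsRing}.

Lemma abs_minus_triangle (a b c : K) : abs (minus a c) <= abs (minus a b) + abs (minus b c).
Proof. rewrite (minus_trans b). apply abs_triangle. Qed.

Lemma abs_minus_self_le (a : K) e : 0 <= e -> abs (minus a a) <= e.
Proof.
  intros He. rewrite (minus_eq_zero (G := K)).
  eapply Rle_trans; [apply Req_le, abs_zero | exact He].
Qed.

Lemma abs_minus_le (a b : K) : abs (minus a b) <= abs a + abs b.
Proof. eapply Rle_trans. apply abs_triangle. rewrite abs_opp. lra. Qed.

Lemma abs_minus_minus_le (a b c e : K) :
  abs (minus (minus a b) (minus c e)) <= abs (minus a c) + abs (minus b e).
Proof.
  change (abs (minus (plus a (opp b)) (plus c (opp e))) <= abs (minus a c) + abs (minus b e)).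
  rewrite (minus_plus_distr (G := K)). eapply Rle_trans; [apply abs_triangle|].
  replace (minus (opp b) (opp e)) with (opp (minus b e)).
  - rewrite abs_opp. lra.
  - unfold minus. rewrite (opp_plus (G := K)). reflexivity.
Qed.

Lemma abs_le_abs_plus_minus (a b : K) : abs b <= abs a + abs (minus a b).
Proof.
  rewrite <- (minus_zero_r b), <- (minus_zero_r a) at 1.
  eapply Rle_trans. apply (abs_minus_triangle _ a). rewrite (abs_minus b a). lra.
Qed.

Lemma eq_of_abs_minus_le (a b : K) M :
  (forall eps, 0 < eps -> abs (minus a b) <= eps * M) -> a = b.
Proof.
  intros H. apply minus_eq_zero_eq, abs_eq_zero, Rle_antisym; [|apply abs_ge_0].
  apply Rle_plus_epsilon. intros eps Heps.
  pose proof (Rabs_pos M).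
  specialize (H (eps / (Rabs M + 1)) ltac:(apply Rdiv_lt_0_compat; lra)).
  enough (eps / (Rabs M + 1) * M <= eps) by lra.
  apply Rle_trans with (eps / (Rabs M + 1) * (Rabs M + 1)).
  - apply Rmult_le_compat_l. apply Rlt_le, Rdiv_lt_0_compat; lra.
    pose proof (Rle_abs M). lra.
  - right. field. lra.
Qed.

End AbsRingFacts.

Lemma Rmult_div_succ_le (a e : R) : 0 <= a -> 0 <= e -> a * (e / (a + 1)) <= e.
Proof.
  intros Ha He. apply Rmult_le_reg_r with (a + 1). lra.
  replace (a * (e / (a + 1)) * (a + 1)) with (a * e) by (field; lra). nra.
Qed.

Definition converges_to {K : AbsRing} (u : nat -> K) (l : K) : Prop :=
  forall eps, 0 < eps -> exists N, forall n, (N <= n)%nat -> abs (minus (u n) l) <= eps.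

Definition homogeneous {K : AbsRing} {X : Type} (d : X -> X -> R) (x0 : X)
  (psi : functional K X) : Prop :=
  forall a h, Lip0 d x0 h -> psi (fun x => mult a (h x)) = mult a (psi h).

Definition lscale {K : AbsRing} {X : Type} (a : K) (l : list (K * X)) : list (K * X) :=
  map (fun p => (mult a (fst p), snd p)) l.

Section FreeSpace.
Context {K : AbsRing}.
Hypothesis K_mult_comm : forall a b : K, mult a b = mult b a.
Hypothesis K_abs_mult : forall a b : K, abs (mult a b) = abs a * abs b.
Hypothesis K_abs_onto : forall r, 0 < r -> exists a : K, abs a = r.
Hypothesis K_complete : forall u : nat -> K,
  (forall eps, 0 < eps -> exists N, forall m n, (N <= m)%nat -> (N <= n)%nat ->
     abs (minus (u m) (u n)) <= eps) ->
  exists l, converges_to u l.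
Context {X : Type} (d : X -> X -> R) (x0 : X).
Hypothesis Hd : is_metric d.

Lemma lip_le_mono (g : X -> K) L L' : lip_le d g L -> L <= L' -> lip_le d g L'.
Proof.
  intros Hg HL x y. eapply Rle_trans. apply Hg.
  apply Rmult_le_compat_r; [apply Hd | exact HL].
Qed.

Lemma lip_le_pos (g : X -> K) L : lip_le d g L -> exists L', 0 < L' /\ lip_le d g L'.
Proof.
  intros Hg. exists (Rmax L 0 + 1). pose proof (Rmax_l L 0). pose proof (Rmax_r L 0).
  split. lra. apply (lip_le_mono _ L); [exact Hg | lra].
Qed.

Lemma Lip0_ball_Lip0 (g : X -> K) : Lip0_ball d x0 g -> Lip0 d x0 g.
Proof. intros [H0 H1]. split; [exact H0 | exists 1; exact H1]. Qed.

Lemma Lip0_scal (a : K) (g : X -> K) : Lip0 d x0 g -> Lip0 d x0 (fun x => mult a (g x)).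
Proof.
  intros [g0 [L HL]]. split. rewrite g0. apply (mult_zero_r (K := K)).
  exists (abs a * L). intros x y. rewrite <- (mult_minus_distr_l (K := K)), K_abs_mult, Rmult_assoc.
  apply Rmult_le_compat_l. apply abs_ge_0. apply HL.
Qed.

Lemma Lip0_plus (g h : X -> K) :
  Lip0 d x0 g -> Lip0 d x0 h -> Lip0 d x0 (fun x => plus (g x) (h x)).
Proof.
  intros [g0 [L HL]] [h0 [M HM]]. split. rewrite g0, h0. apply (plus_zero_l (G := K)).
  exists (L + M). intros x y. rewrite (minus_plus_distr (G := K)).
  eapply Rle_trans. apply abs_triangle. rewrite Rmult_plus_distr_r.
  apply Rplus_le_compat; [apply HL | apply HM].
Qed.

Lemma Lip0_minus (g h : X -> K) :
  Lip0 d x0 g -> Lip0 d x0 h -> Lip0 d x0 (fun x => minus (g x) (h x)).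
Proof.
  intros [g0 [L HL]] [h0 [M HM]]. split. rewrite g0, h0. apply (minus_eq_zero (G := K)).
  exists (L + M). intros x y. eapply Rle_trans. apply abs_minus_minus_le.
  rewrite Rmult_plus_distr_r. apply Rplus_le_compat; [apply HL | apply HM].
Qed.

Lemma abs_le_of_Lip0_ball (g : X -> K) x : Lip0_ball d x0 g -> abs (g x) <= d x x0.
Proof.
  intros [g0 Hg]. specialize (Hg x x0). rewrite g0, (minus_zero_r (G := K)) in Hg. lra.
Qed.

Lemma in_dual_homogeneous (phi : functional K X) : in_dual d x0 phi -> homogeneous d x0 phi.
Proof. intros [_ [H _]]. exact H. Qed.

Lemma homogeneous_fdiff (phi psi : functional K X) :
  homogeneous d x0 phi -> homogeneous d x0 psi -> homogeneous d x0 (fdiff phi psi).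
Proof.
  intros H1 H2 a h Hh. unfold fdiff. rewrite H1, H2 by exact Hh.
  symmetry. apply (mult_minus_distr_l (K := K)).
Qed.

(* Rescaling [h] into the unit ball is where the absolute value must reach every positive real. *)
Lemma abs_apply_le_of_lip (psi : functional K X) c (h : X -> K) L :
  homogeneous d x0 psi -> dnorm_le d x0 psi c -> Lip0 d x0 h -> lip_le d h L -> 0 < L ->
  abs (psi h) <= c * L.
Proof.
  intros Hhom Hb Hh Hl HL.
  destruct (K_abs_onto (/ L)) as [a Ha]. apply Rinv_0_lt_compat, HL.
  assert (Hball : Lip0_ball d x0 (fun x => mult a (h x))).
  { split.
    - destruct Hh as [h0 _]. rewrite h0. apply (mult_zero_r (K := K)).
    - intros x y. rewrite <- (mult_minus_distr_l (K := K)), K_abs_mult, Ha, Rmult_1_l.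
      apply Rmult_le_reg_l with L. exact HL.
      rewrite <- Rmult_assoc, Rinv_r, Rmult_1_l by lra. apply Hl. }
  specialize (Hb _ Hball). rewrite Hhom, K_abs_mult, Ha in Hb by exact Hh.
  apply Rmult_le_compat_l with (r := L) in Hb; [|lra].
  rewrite <- Rmult_assoc, Rinv_r, Rmult_1_l in Hb by lra. lra.
Qed.

Lemma in_dual_minus (phi : functional K X) (u v : X -> K) :
  in_dual d x0 phi -> Lip0 d x0 u -> Lip0 d x0 v ->
  phi (fun x => minus (u x) (v x)) = minus (phi u) (phi v).
Proof.
  intros [Hadd [Hhom _]] Hu Hv.
  replace (fun x => minus (u x) (v x)) with (fun x => plus (u x) (mult (opp one) (v x))).
  - rewrite Hadd, Hhom by auto using Lip0_scal. rewrite <- opp_mult_m1. reflexivity.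
  - apply functional_extensionality. intros x. rewrite <- opp_mult_m1. reflexivity.
Qed.

Lemma lincomb_app (l1 l2 : list (K * X)) g :
  lincomb (l1 ++ l2) g = plus (lincomb l1 g) (lincomb l2 g).
Proof.
  induction l1 as [|[b x] l1 IH].
  - change (lincomb l2 g = plus zero (lincomb l2 g)). symmetry. apply (plus_zero_l (G := K)).
  - change (plus (mult b (g x)) (lincomb (l1 ++ l2) g)
            = plus (plus (mult b (g x)) (lincomb l1 g)) (lincomb l2 g)).
    rewrite IH. apply (plus_assoc (G := K)).
Qed.

Lemma lincomb_lscale (a : K) (l : list (K * X)) g :
  lincomb (lscale a l) g = mult a (lincomb l g).
Proof.
  induction l as [|[b x] l IH].
  - change (zero = mult a zero). symmetry. apply (mult_zero_r (K := K)).
  - change (plus (mult (mult a b) (g x)) (lincomb (lscale a l) g)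
            = mult a (plus (mult b (g x)) (lincomb l g))).
    rewrite IH, (mult_distr_l (K := K)), (mult_assoc (K := K)). reflexivity.
Qed.

Lemma in_free_zero : in_free d x0 (fun _ => (zero : K)).
Proof.
  split; [split; [|split]|].
  - intros. symmetry. apply (plus_zero_l (G := K)).
  - intros. symmetry. apply (mult_zero_r (K := K)).
  - exists 0. intros g _. apply Req_le, abs_zero.
  - intros eps Heps. exists nil. intros g _. apply abs_minus_self_le. lra.
Qed.

Lemma in_free_delta x : in_free d x0 (delta (K := K) x).
Proof.
  split; [split; [|split]|].
  - reflexivity.
  - reflexivity.
  - exists (d x x0). intros g Hg. apply abs_le_of_Lip0_ball, Hg.
  - intros eps Heps. exists ((one, x) :: nil). intros g _. unfold fdiff, delta. cbn.
    rewrite (plus_zero_r (G := K)), (mult_one_l (K := K)). apply abs_minus_self_le. lra.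
Qed.

Lemma in_free_comb (a : K) (phi psi : functional K X) :
  in_free d x0 phi -> in_free d x0 psi -> in_free d x0 (fun g => plus (mult a (phi g)) (psi g)).
Proof.
  intros [[Ap [Hp [Cp Bp]]] Fp] [[As [Hs [Cs Bs]]] Fs].
  pose proof (abs_ge_0 a) as Ha.
  split; [split; [|split]|].
  - intros g h Hg Hh. rewrite Ap, As, (mult_distr_l (K := K)) by assumption.
    apply (plus_swap_middle (G := K)).
  - intros b g Hg.
    rewrite Hp, Hs, (mult_distr_l (K := K)), !(mult_assoc (K := K)), (K_mult_comm a b) by exact Hg.
    reflexivity.
  - exists (abs a * Cp + Cs). intros g Hg. eapply Rle_trans. apply abs_triangle.
    rewrite K_abs_mult. apply Rplus_le_compat; [apply Rmult_le_compat_l|]; auto.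
  - intros eps Heps.
    destruct (Fp (eps / 2 / (abs a + 1))) as [l1 H1]. apply Rdiv_lt_0_compat; lra.
    destruct (Fs (eps / 2)) as [l2 H2]. lra.
    exists (lscale a l1 ++ l2). intros g Hg. unfold fdiff.
    rewrite lincomb_app, lincomb_lscale, (minus_plus_distr (G := K)),
      <- (mult_minus_distr_l (K := K)).
    eapply Rle_trans. apply abs_triangle. rewrite K_abs_mult.
    pose proof (Rmult_div_succ_le (abs a) (eps / 2) Ha ltac:(lra)).
    eapply Rle_trans.
    { apply Rplus_le_compat; [| apply (H2 g Hg)].
      apply Rmult_le_compat_l; [exact Ha | apply (H1 g Hg)]. }
    lra.
Qed.

Lemma in_free_lincomb (l : list (K * X)) : in_free d x0 (lincomb l).
Proof.
  induction l as [|[b x] l IH].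
  - apply in_free_zero.
  - apply (in_free_comb b (delta x) (lincomb l)); [apply in_free_delta | exact IH].
Qed.

Lemma converges_to_unique (u : nat -> K) l1 l2 : converges_to u l1 -> converges_to u l2 -> l1 = l2.
Proof.
  intros H1 H2. apply (eq_of_abs_minus_le _ _ 2). intros eps He.
  destruct (H1 eps He) as [N1 HN1]. destruct (H2 eps He) as [N2 HN2].
  eapply Rle_trans. apply (abs_minus_triangle _ (u (N1 + N2)%nat)).
  rewrite abs_minus. pose proof (HN1 (N1 + N2)%nat ltac:(lia)).
  pose proof (HN2 (N1 + N2)%nat ltac:(lia)). lra.
Qed.

Lemma converges_to_abs_minus_le (u : nat -> K) l v k c :
  (forall n, (k <= n)%nat -> abs (minus v (u n)) <= c) -> converges_to u l -> abs (minus v l) <= c.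
Proof.
  intros H Hl. apply Rle_plus_epsilon. intros eps He.
  destruct (Hl eps He) as [N HN].
  eapply Rle_trans. apply (abs_minus_triangle _ (u (N + k)%nat)).
  pose proof (H (N + k)%nat ltac:(lia)). pose proof (HN (N + k)%nat ltac:(lia)). lra.
Qed.

Lemma converges_to_plus (u v : nat -> K) l1 l2 : converges_to u l1 -> converges_to v l2 ->
  converges_to (fun n => plus (u n) (v n)) (plus l1 l2).
Proof.
  intros H1 H2 eps He.
  destruct (H1 (eps / 2)) as [N1 HN1]. lra. destruct (H2 (eps / 2)) as [N2 HN2]. lra.
  exists (N1 + N2)%nat. intros n Hn. rewrite (minus_plus_distr (G := K)).
  eapply Rle_trans. apply abs_triangle.
  pose proof (HN1 n ltac:(lia)). pose proof (HN2 n ltac:(lia)). lra.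
Qed.

Lemma converges_to_scal a (u : nat -> K) l : converges_to u l ->
  converges_to (fun n => mult a (u n)) (mult a l).
Proof.
  intros H eps He. pose proof (abs_ge_0 a).
  destruct (H (eps / (abs a + 1))) as [N HN]. apply Rdiv_lt_0_compat; lra.
  exists N. intros n Hn. rewrite <- (mult_minus_distr_l (K := K)), K_abs_mult.
  eapply Rle_trans; [apply Rmult_le_compat_l; [auto | apply (HN n Hn)] |].
  apply Rmult_div_succ_le; lra.
Qed.

Lemma converges_to_ext (u v : nat -> K) l :
  (forall n, u n = v n) -> converges_to u l -> converges_to v l.
Proof.
  intros E H eps He. destruct (H eps He) as [N HN]. exists N. intros n Hn. rewrite <- E. auto.
Qed.

Lemma in_free_of_uniform_limit (u : nat -> functional K X) (psi : functional K X) :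
  (forall n, in_free d x0 (u n)) ->
  (forall g, Lip0 d x0 g -> converges_to (fun n => u n g) (psi g)) ->
  (forall eps, 0 < eps -> exists N, forall n, (N <= n)%nat ->
     dnorm_le d x0 (fdiff (u n) psi) eps) ->
  in_free d x0 psi.
Proof.
  intros Hu Hpt Hunif. split; [split; [|split]|].
  - intros g h Hg Hh. apply (converges_to_unique (fun n => u n (fun x => plus (g x) (h x)))).
    + apply Hpt, Lip0_plus; assumption.
    + apply (converges_to_ext (fun n => plus (u n g) (u n h))).
      * intros n. symmetry. apply (proj1 (proj1 (Hu n))); assumption.
      * apply converges_to_plus; apply Hpt; assumption.
  - intros a g Hg. apply (converges_to_unique (fun n => u n (fun x => mult a (g x)))).
    + apply Hpt, Lip0_scal, Hg.
    + apply (converges_to_ext (fun n => mult a (u n g))).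
      * intros n. symmetry. apply (proj1 (proj2 (proj1 (Hu n)))), Hg.
      * apply converges_to_scal, Hpt, Hg.
  - destruct (Hunif 1) as [N HN]. lra.
    destruct (Hu N) as [[_ [_ [C HC]]] _].
    exists (C + 1). intros g Hg.
    eapply Rle_trans. apply (abs_le_abs_plus_minus (u N g)).
    pose proof (HC g Hg). pose proof (HN N (le_n N) g Hg). unfold fdiff in *. lra.
  - intros eps He.
    destruct (Hunif (eps / 2)) as [N HN]. lra.
    destruct (proj2 (Hu N) (eps / 2)) as [l Hl]. lra.
    exists l. intros g Hg. unfold fdiff.
    eapply Rle_trans. apply (abs_minus_triangle _ (u N g)).
    rewrite abs_minus. pose proof (HN N (le_n N) g Hg). pose proof (Hl g Hg).
    unfold fdiff in *. lra.
Qed.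

Lemma in_free_complete (u : nat -> functional K X) :
  (forall n, in_free d x0 (u n)) ->
  (forall eps, 0 < eps -> exists N, forall m n, (N <= m)%nat -> (N <= n)%nat ->
     dnorm_le d x0 (fdiff (u m) (u n)) eps) ->
  exists psi, in_free d x0 psi /\
    forall eps, 0 < eps -> exists N, forall n, (N <= n)%nat -> dnorm_le d x0 (fdiff (u n) psi) eps.
Proof.
  intros Hu Hcauchy.
  assert (Hpt : forall g, Lip0 d x0 g -> exists l, converges_to (fun n => u n g) l).
  { intros g Hg. apply K_complete. intros eps He.
    destruct Hg as [g0 [L0 HL0]]. destruct (lip_le_pos g L0 HL0) as [L [HL HgL]].
    destruct (Hcauchy (eps / L)) as [N HN]. apply Rdiv_lt_0_compat; assumption.
    exists N. intros m n Hm Hn.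
    replace eps with (eps / L * L) by (field; lra).
    apply (abs_apply_le_of_lip (fdiff (u m) (u n))); auto.
    - apply homogeneous_fdiff; apply in_dual_homogeneous, Hu.
    - split; [exact g0 | exists L0; exact HL0]. }
  set (psi := fun g => epsilon (inhabits zero) (converges_to (fun n => u n g))).
  assert (Hpsi : forall g, Lip0 d x0 g -> converges_to (fun n => u n g) (psi g)).
  { intros g Hg. apply epsilon_spec, Hpt, Hg. }
  assert (Hunif : forall eps, 0 < eps -> exists N, forall n, (N <= n)%nat ->
            dnorm_le d x0 (fdiff (u n) psi) eps).
  { intros eps He. destruct (Hcauchy eps He) as [N HN]. exists N. intros n Hn g Hg.
    apply (converges_to_abs_minus_le (fun m => u m g) _ _ N).
    - intros m Hm. apply (HN n m Hn Hm g Hg).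
    - apply Hpsi, Lip0_ball_Lip0, Hg. }
  exists psi. split; [apply (in_free_of_uniform_limit u) |]; assumption.
Qed.

End FreeSpace.

Section LocalToGlobal.
Context {K : AbsRing} {X : Type} (d : X -> X -> R) (x0 : X).
Hypothesis Hd : is_metric d.

Lemma exists_radius_beyond (R0 : R) : 0 <= R0 -> exists R1, R0 <= R1 /\
  forall y, R1 < d y x0 -> exists w, R0 <= d w x0 /\ 2 * R0 + d w x0 <= R1.
Proof.
  intros HR0. destruct (classic (exists w, R0 <= d w x0)) as [[w Hw] | Hnone].
  - exists (2 * R0 + d w x0). split; [lra |]. intros y _. exists w. split; lra.
  - exists R0. split; [lra |]. intros y Hy. exfalso. apply Hnone. exists y. lra.
Qed.

(* When [x] is near the origin and [y] is beyond [R1], route through the point [w] of norm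
   between [R0] and [R1]: the pair [(w, y)] lies near infinity and [d y w <= 2 d x y]. *)
Lemma abs_minus_le_near_origin (G : X -> K) eps delta R0 R1 :
  0 < eps -> 0 < delta -> 0 <= R0 -> R0 <= R1 ->
  (forall y, R1 < d y x0 -> exists w, R0 <= d w x0 /\ 2 * R0 + d w x0 <= R1) ->
  (forall x y, x <> y -> R0 <= d x x0 -> R0 <= d y x0 ->
     abs (minus (G x) (G y)) <= eps / 4 * d x y) ->
  (forall x, d x x0 <= R1 -> abs (G x) <= eps * delta / 4) ->
  forall x y, delta <= d x y -> d x x0 < R0 -> abs (minus (G x) (G y)) <= eps * d x y.
Proof.
  intros Heps Hdelta HR0 HR01 HR1 Hfar Hbnd x y Hxy Hx.
  destruct Hd as [Hnn [_ [Hsym Htri]]].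
  assert (Hsmall : eps * delta <= eps * d x y) by (apply Rmult_le_compat_l; lra).
  pose proof (Hbnd x ltac:(lra)).
  destruct (Rle_or_lt (d y x0) R1) as [Hy | Hy].
  - pose proof (Hbnd y Hy). eapply Rle_trans. apply abs_minus_le. nra.
  - destruct (HR1 y Hy) as [w [Hw HwR1]].
    pose proof (Hnn w x0). pose proof (Hbnd w ltac:(lra)).
    assert (Hyw : d y w <= 2 * d x y).
    { pose proof (Htri y x w). pose proof (Htri x x0 w). pose proof (Htri y x x0).
      rewrite (Hsym x0 w), (Hsym y x) in *. lra. }
    assert (Hfar_yw : abs (minus (G w) (G y)) <= eps / 4 * d y w).
    { rewrite abs_minus. apply Hfar; [intros -> | |]; lra. }
    eapply Rle_trans. apply (abs_minus_triangle _ (G w)).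
    pose proof (abs_minus_le (G x) (G w)). nra.
Qed.

Lemma lip_le_of_local_far_bounded (eps delta R0 : R) : 0 < eps -> 0 < delta -> 0 <= R0 ->
  exists R1, forall G : X -> K,
    (forall x y, x <> y -> d x y < delta -> abs (minus (G x) (G y)) <= eps * d x y) ->
    (forall x y, x <> y -> R0 <= d x x0 -> R0 <= d y x0 ->
       abs (minus (G x) (G y)) <= eps / 4 * d x y) ->
    (forall x, d x x0 <= R1 -> abs (G x) <= eps * delta / 4) ->
    lip_le d G eps.
Proof.
  intros Heps Hdelta HR0. destruct (exists_radius_beyond R0 HR0) as [R1 [HR01 HR1]].
  exists R1. intros G Hloc Hfar Hbnd x y.
  pose proof Hd as [Hnn [_ [Hsym _]]]. pose proof (Hnn x y).
  destruct (classic (x = y)) as [<- | Hxy].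
  { apply abs_minus_self_le. nra. }
  destruct (Rlt_or_le (d x y) delta) as [Hclose | Hapart]; [auto |].
  pose proof (abs_minus_le_near_origin G eps delta R0 R1 Heps Hdelta HR0 HR01 HR1 Hfar Hbnd)
    as Hnear.
  destruct (Rlt_or_le (d x x0) R0) as [Hx | Hx]; [auto |].
  destruct (Rlt_or_le (d y x0) R0) as [Hy | Hy].
  - rewrite abs_minus, Hsym. apply Hnear; [rewrite Hsym |]; assumption.
  - eapply Rle_trans; [apply Hfar; assumption |]. nra.
Qed.

End LocalToGlobal.

Lemma finite_representatives {A B : Type} (S : A -> Prop) (Rel : A -> B -> Prop) (P : list B) :
  exists cs : list A, (forall c, In c cs -> S c) /\
    forall a p, S a -> In p P -> Rel a p -> exists c, In c cs /\ Rel c p.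
Proof.
  induction P as [|p P [cs [HcS Hcs]]].
  - exists nil. split; [intros c [] | intros a p _ []].
  - destruct (classic (exists c, S c /\ Rel c p)) as [[c [Hc Hcp]] | Hnone].
    + exists (c :: cs). split.
      * intros c' [<- | Hc']; auto.
      * intros a q Ha [<- | Hq] Haq; [exists c; split; [left |]; auto |].
        destruct (Hcs a q Ha Hq Haq) as [c' [Hc' Hc'q]]. exists c'. split; [right |]; auto.
    + exists cs. split; [exact HcS |]. intros a q Ha [<- | Hq] Haq.
      * exfalso. apply Hnone. exists a. auto.
      * apply (Hcs a q); assumption.
Qed.

Lemma Forall2_In_common {A B : Type} (R1 R2 : A -> B -> Prop) l p x :
  Forall2 R1 l p -> Forall2 R2 l p -> In x l -> exists z, R1 x z /\ R2 x z.
Proof.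
  intros H1. induction H1 as [|a b l p Hab H1 IH]; intros H2 Hx; [destruct Hx |].
  inversion H2; subst. destruct Hx as [<- | Hx]; [exists b; auto | apply IH; assumption].
Qed.

Section FiniteNets.
Context {K : AbsRing}.
Hypothesis K_bounded_net : forall r eta, 0 < eta -> exists zs : list K,
  forall z, abs z <= r -> exists w, In w zs /\ abs (minus z w) <= eta.

Lemma finite_patterns {A : Type} (S : A -> Prop) (fs : list (A -> K)) eta : 0 < eta ->
  (forall F, In F fs -> exists r, forall a, S a -> abs (F a) <= r) ->
  exists P : list (list K), forall a, S a -> exists p, In p P /\
    Forall2 (fun F z => abs (minus (F a) z) <= eta) fs p.
Proof.
  intros Heta. induction fs as [|F fs IH]; intros Hbnd.
  - exists (nil :: nil). intros a _. exists nil. split; [left; reflexivity | constructor].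
  - destruct IH as [P HP]. { intros F' HF'. apply Hbnd. right. exact HF'. }
    destruct (Hbnd F (or_introl eq_refl)) as [r Hr].
    destruct (K_bounded_net r eta Heta) as [zs Hzs].
    exists (flat_map (fun z => map (cons z) P) zs). intros a Ha.
    destruct (Hzs (F a) (Hr a Ha)) as [w [Hw Haw]].
    destruct (HP a Ha) as [p [Hp Hap]].
    exists (w :: p). split.
    + apply in_flat_map. exists w. split; [exact Hw | apply in_map, Hp].
    + constructor; assumption.
Qed.


Lemma finite_net_of_bounded_coords {A : Type} (S : A -> Prop) (fs : list (A -> K)) eta : 0 < eta ->
  (forall F, In F fs -> exists r, forall a, S a -> abs (F a) <= r) ->
  exists cs : list A, (forall c, In c cs -> S c) /\
    forall a, S a -> exists c, In c cs /\ forall F, In F fs -> abs (minus (F a) (F c)) <= eta.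
Proof.
  intros Heta Hbnd.
  destruct (finite_patterns S fs (eta / 2) ltac:(lra) Hbnd) as [P HP].
  destruct (finite_representatives S
              (fun a p => Forall2 (fun F z => abs (minus (F a) z) <= eta / 2) fs p) P)
    as [cs [HcS Hcs]].
  exists cs. split; [exact HcS |]. intros a Ha.
  destruct (HP a Ha) as [p [Hp Hap]].
  destruct (Hcs a p Ha Hp Hap) as [c [Hc Hcp]].
  exists c. split; [exact Hc |]. intros F HF.
  destruct (Forall2_In_common _ _ _ _ F Hap Hcp HF) as [z [Haz Hcz]].
  eapply Rle_trans. apply (abs_minus_triangle _ z). rewrite (abs_minus z). lra.
Qed.

End FiniteNets.

Definition increasing (s : nat -> nat) : Prop := forall n, (s n < s (S n))%nat.

Lemma increasing_lt (s : nat -> nat) : increasing s -> forall a b, (a < b)%nat -> (s a < s b)%nat.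
Proof.
  intros Hs a b Hab. induction Hab as [|b Hab IH]; [apply Hs |].
  specialize (Hs b). lia.
Qed.

Lemma increasing_ge (s : nat -> nat) : increasing s -> forall n, (n <= s n)%nat.
Proof. intros Hs n. induction n as [|n IH]; [lia |]. specialize (Hs n). lia. Qed.

Lemma infinite_pigeonhole {U : Type} (P : list U) (Q : nat -> U -> Prop) :
  (forall n, exists p, In p P /\ Q n p) ->
  exists p, In p P /\ forall N, exists n, (N <= n)%nat /\ Q n p.
Proof.
  revert Q. induction P as [|p P IH]; intros Q HQ.
  - destruct (HQ 0%nat) as [p [[] _]].
  - destruct (classic (forall N, exists n, (N <= n)%nat /\ Q n p)) as [Hp | Hp].
    + exists p. split; [left |]; auto.
    + apply not_all_ex_not in Hp as [N0 HN0].
      destruct (IH (fun n q => Q (n + N0)%nat q)) as [q [Hq HQq]].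
      * intros n. destruct (HQ (n + N0)%nat) as [q [[<- | Hq] Hnq]].
        -- exfalso. apply HN0. exists (n + N0)%nat. split; [lia | exact Hnq].
        -- exists q. auto.
      * exists q. split; [right; exact Hq |]. intros N.
        destruct (HQq N) as [n [Hn Hnq]]. exists (n + N0)%nat. split; [lia | exact Hnq].
Qed.

Lemma increasing_subseq_of_frequently (Q : nat -> Prop) :
  (forall N, exists n, (N <= n)%nat /\ Q n) -> exists s, increasing s /\ forall k, Q (s k).
Proof.
  intros HQ. destruct (choice _ HQ) as [next Hnext].
  pose (s := fix s k := match k with O => next O | S k => next (S (s k)) end).
  exists s. split.
  - intros n. change (s n < next (S (s n)))%nat. apply Hnext.
  - intros [|k]; apply Hnext.
Qed.

Lemma diagonal_subsequence (C : nat -> nat -> nat -> Prop) :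
  (forall (tau : nat -> nat) k,
     exists s, increasing s /\ forall i j, C k (tau (s i)) (tau (s j))) ->
  exists D, increasing D /\ forall k a b, (k <= a)%nat -> (k <= b)%nat -> C k (D a) (D b).
Proof.
  intros Hsel.
  destruct (choice (fun (q : (nat -> nat) * nat) s =>
              increasing s /\ forall i j, C (snd q) (fst q (s i)) (fst q (s j))))
    as [sel Hs].
  { intros [tau k]. apply Hsel. }
  (* [tau (S k)] thins [tau k] to meet requirement [S k]; the diagonal [tau k k] then meets
     every requirement [k] from index [k] on. *)
  pose (tau := fix tau k := match k with
                            | O => sel (fun n => n, O)
                            | S k => fun n => tau k (sel (tau k, S k) n)
                            end).
  assert (Htau_inc : forall k, increasing (tau k)).
  { induction k as [|k IH]; intros n; [apply (Hs (fun n => n, O)) |].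
    change (tau k (sel (tau k, S k) n) < tau k (sel (tau k, S k) (S n)))%nat.
    apply (increasing_lt _ IH), (Hs (tau k, S k)). }
  assert (Htau_C : forall k i j, C k (tau k i) (tau k j)).
  { intros [|k] i j; [apply (Hs (fun n => n, O)) | apply (Hs (tau k, S k))]. }
  assert (Htau_nest : forall e k n, exists a, tau (e + k)%nat n = tau k a).
  { induction e as [|e IH]; intros k n; [exists n; reflexivity |].
    exact (IH k (sel (tau (e + k)%nat, S (e + k)) n)). }
  exists (fun k => tau k k). split.
  - intros n. change (tau n n < tau n (sel (tau n, S n) (S n)))%nat.
    apply (increasing_lt _ (Htau_inc n)).
    pose proof (increasing_ge _ (proj1 (Hs (tau n, S n))) (S n)). lia.
  - intros k a b Ha Hb.
    destruct (Htau_nest (a - k)%nat k a) as [a' Ea]. replace (a - k + k)%nat with a in Ea by lia.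
    destruct (Htau_nest (b - k)%nat k b) as [b' Eb]. replace (b - k + k)%nat with b in Eb by lia.
    rewrite Ea, Eb. apply Htau_C.
Qed.

Lemma abs_minus_sub_le {K : AbsRing} {Y : Type} (dY : Y -> Y -> R) (g g' : Y -> K) u v :
  lip_le dY g 1 -> lip_le dY g' 1 ->
  abs (minus (minus (g u) (g' u)) (minus (g v) (g' v))) <= 2 * dY u v.
Proof.
  intros Hg Hg'. eapply Rle_trans. apply abs_minus_minus_le.
  pose proof (Hg u v). pose proof (Hg' u v). lra.
Qed.

Lemma abs_sub_le_of_near {K : AbsRing} {Y : Type} (dY : Y -> Y -> R) (g g' : Y -> K) u y :
  (forall a b, dY a b = dY b a) -> lip_le dY g 1 -> lip_le dY g' 1 ->
  abs (minus (g u) (g' u)) <= 2 * dY u y + abs (minus (g y) (g' y)).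
Proof.
  intros Hsym Hg Hg'.
  eapply Rle_trans. apply (abs_minus_triangle _ (g y)).
  eapply Rle_trans. apply Rplus_le_compat_l, (abs_minus_triangle _ (g' y)).
  pose proof (Hg u y). pose proof (Hg' y u). rewrite (Hsym y u) in *. lra.
Qed.

Section CompositionOperator.
Context {K : AbsRing}.
Hypothesis K_mult_comm : forall a b : K, mult a b = mult b a.
Hypothesis K_abs_mult : forall a b : K, abs (mult a b) = abs a * abs b.
Hypothesis K_abs_onto : forall r, 0 < r -> exists a : K, abs a = r.
Hypothesis K_bounded_net : forall r eta, 0 < eta -> exists zs : list K,
  forall z, abs z <= r -> exists w, In w zs /\ abs (minus z w) <= eta.
Hypothesis K_complete : forall u : nat -> K,
  (forall eps, 0 < eps -> exists N, forall m n, (N <= m)%nat -> (N <= n)%nat ->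
     abs (minus (u m) (u n)) <= eps) ->
  exists l, converges_to u l.
Context {X Y : Type} (dX : X -> X -> R) (dY : Y -> Y -> R) (x0 : X) (y0 : Y).
Hypothesis HmX : is_metric dX.
Hypothesis HmY : is_metric dY.
Context (f : X -> Y) (Lf : R).
Hypothesis HLf0 : 0 <= Lf.
Hypothesis HLf : forall x y, dY (f x) (f y) <= Lf * dX x y.
Hypothesis Hf0 : f x0 = y0.
Hypothesis HP1 : forall S : X -> Prop, (exists r, forall x, S x -> dX x x0 <= r) ->
  forall eps, 0 < eps -> exists l : list Y, forall x, S x -> exists y, In y l /\ dY (f x) y <= eps.
Hypothesis HP2 : forall eps, 0 < eps -> exists delta, 0 < delta /\
  forall x y, x <> y -> dX x y < delta -> dY (f x) (f y) <= eps * dX x y.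
Hypothesis HP4 : forall eps, 0 < eps -> exists Rad, 0 < Rad /\
  forall x y, x <> y -> Rad <= dX x x0 -> Rad <= dX y x0 -> dY (f x) (f y) <= eps * dX x y.

Lemma lip_le_comp (g : Y -> K) L : lip_le dY g L -> 0 <= L -> lip_le dX (fun x => g (f x)) (L * Lf).
Proof.
  intros Hg HL x y. eapply Rle_trans. apply Hg. rewrite Rmult_assoc.
  apply Rmult_le_compat_l; [exact HL | apply HLf].
Qed.

Lemma Lip0_comp (g : Y -> K) : Lip0 dY y0 g -> Lip0 dX x0 (fun x => g (f x)).
Proof.
  intros [g0 [L0 HL0]]. split; [rewrite Hf0; exact g0 |].
  destruct (lip_le_pos dY HmY g L0 HL0) as [L [HL HgL]].
  exists (L * Lf). apply lip_le_comp; [exact HgL | lra].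
Qed.

(* The constants: [eps/8] in (P2) and (P4) doubles to [eps/4] through [abs_minus_sub_le], and
   the radius [R1] is then covered by an [eps * delta / 12]-net of its image. *)
Lemma comp_sub_lip_small eps : 0 < eps -> exists (ys : list Y) (eta : R), 0 < eta /\
  forall g g' : Y -> K, Lip0_ball dY y0 g -> Lip0_ball dY y0 g' ->
    (forall y, In y ys -> abs (minus (g y) (g' y)) <= eta) ->
    lip_le dX (fun x => minus (g (f x)) (g' (f x))) eps.
Proof.
  intros Heps.
  destruct (HP2 (eps / 8)) as [delta [Hdelta Hloc]]. lra.
  destruct (HP4 (eps / 8)) as [R0 [HR0 Hfar]]. lra.
  destruct (lip_le_of_local_far_bounded (K := K) dX x0 HmX eps delta R0 Heps Hdelta ltac:(lra))
    as [R1 HR1].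
  destruct (HP1 (fun x => dX x x0 <= R1) (ex_intro _ R1 (fun x Hx => Hx)) (eps * delta / 12))
    as [ys Hys]. nra.
  exists ys, (eps * delta / 12). split; [nra |].
  intros g g' [_ Hg] [_ Hg'] Hclose. pose proof HmY as [_ [_ [HsymY _]]].
  apply HR1.
  - intros x y Hxy Hxy'. eapply Rle_trans; [apply (abs_minus_sub_le dY); assumption |].
    pose proof (Hloc x y Hxy Hxy'). pose proof (proj1 HmX x y). nra.
  - intros x y Hxy Hx Hy. eapply Rle_trans; [apply (abs_minus_sub_le dY); assumption |].
    pose proof (Hfar x y Hxy Hx Hy). nra.
  - intros x Hx. destruct (Hys x Hx) as [y [Hy Hfy]].
    eapply Rle_trans; [apply (abs_sub_le_of_near dY g g' (f x) y); assumption |].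
    pose proof (Hclose y Hy). lra.
Qed.

Lemma comp_finite_net eps : 0 < eps -> exists gs : list (Y -> K),
  (forall g, In g gs -> Lip0_ball dY y0 g) /\
  forall g, Lip0_ball dY y0 g ->
    exists g', In g' gs /\ lip_le dX (fun x => minus (g (f x)) (g' (f x))) eps.
Proof.
  intros Heps. destruct (comp_sub_lip_small eps Heps) as [ys [eta [Heta Hflat]]].
  destruct (finite_net_of_bounded_coords K_bounded_net (Lip0_ball dY y0)
              (map (fun y g => g y) ys) eta Heta) as [gs [Hgs Hnet]].
  { intros F HF. apply in_map_iff in HF as [y [<- _]]. exists (dY y y0).
    intros g Hg. apply abs_le_of_Lip0_ball, Hg. }
  exists gs. split; [exact Hgs |]. intros g Hg.
  destruct (Hnet g Hg) as [g' [Hg' Hgg']]. exists g'. split; [exact Hg' |].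
  apply Hflat; auto. intros y Hy. apply (Hgg' (fun g => g y)), in_map_iff. exists y. auto.
Qed.

Lemma comp_uniformly_cauchy_subseq_le (psi : nat -> functional K X) eps : 0 < eps ->
  (forall n, in_dual dX x0 (psi n) /\ dnorm_le dX x0 (psi n) 1) ->
  exists s, increasing s /\ forall i j (g : Y -> K), Lip0_ball dY y0 g ->
    abs (minus (psi (s i) (fun x => g (f x))) (psi (s j) (fun x => g (f x)))) <= eps.
Proof.
  intros Heps Hpsi.
  destruct (comp_finite_net (eps / 3)) as [gs [Hgs Hnet]]. lra.
  set (coords := map (fun (g : Y -> K) n => psi n (fun x => g (f x))) gs).
  destruct (finite_net_of_bounded_coords K_bounded_net (fun _ : nat => True) coords (eps / 6))
    as [ns [_ Hns]]. lra.
  { intros F HF. apply in_map_iff in HF as [g [<- Hg]]. exists (1 * (Lf + 1)). intros n _.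
    apply (abs_apply_le_of_lip K_abs_mult K_abs_onto dX x0);
      [apply in_dual_homogeneous, Hpsi | apply Hpsi
      | apply Lip0_comp, Lip0_ball_Lip0, Hgs, Hg | | lra].
    apply (lip_le_mono dX HmX _ (1 * Lf)); [apply lip_le_comp; [apply Hgs, Hg | lra] | lra]. }
  destruct (infinite_pigeonhole ns
              (fun n m => forall F, In F coords -> abs (minus (F n) (F m)) <= eps / 6))
    as [m [_ Hm]].
  { intros n. destruct (Hns n I) as [m [Hm HFm]]. exists m. auto. }
  destruct (increasing_subseq_of_frequently _ Hm) as [s [Hs Hsm]].
  exists s. split; [exact Hs |]. intros i j g Hg.
  destruct (Hnet g Hg) as [g' [Hg' Hgg']].
  assert (Happrox : forall n,
            abs (minus (psi n (fun x => g (f x))) (psi n (fun x => g' (f x)))) <= eps / 3).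
  { intros n. destruct (Hpsi n) as [Hdual Hnorm].
    rewrite <- (in_dual_minus K_abs_mult dX x0 (psi n)) by (auto using Lip0_comp, Lip0_ball_Lip0).
    rewrite <- (Rmult_1_l (eps / 3)).
    apply (abs_apply_le_of_lip K_abs_mult K_abs_onto dX x0);
      [apply in_dual_homogeneous, Hdual | exact Hnorm | | exact Hgg' | lra].
    apply Lip0_minus; apply Lip0_comp, Lip0_ball_Lip0; auto. }
  set (c := fun n => psi n (fun x => g' (f x))).
  assert (Hcentre : abs (minus (c (s i)) (c (s j))) <= eps / 3).
  { assert (Hc : In c coords) by (apply in_map_iff; exists g'; auto).
    pose proof (Hsm i c Hc). pose proof (Hsm j c Hc).
    eapply Rle_trans. apply (abs_minus_triangle _ (c m)). rewrite (abs_minus (c m)). lra. }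
  pose proof (Happrox (s i)). pose proof (Happrox (s j)).
  eapply Rle_trans. apply (abs_minus_triangle _ (c (s i))).
  eapply Rle_trans. apply Rplus_le_compat_l, (abs_minus_triangle _ (c (s j))).
  rewrite (abs_minus (c (s j))). unfold c in *. lra.
Qed.

Lemma comp_uniformly_cauchy_subseq (phi : nat -> functional K X) :
  (forall n, in_free dX x0 (phi n) /\ dnorm_le dX x0 (phi n) 1) ->
  exists D, increasing D /\ forall eps, 0 < eps -> exists N, forall a b,
    (N <= a)%nat -> (N <= b)%nat -> forall g : Y -> K, Lip0_ball dY y0 g ->
      abs (minus (phi (D a) (fun x => g (f x))) (phi (D b) (fun x => g (f x)))) <= eps.
Proof.
  intros Hphi.
  destruct (diagonal_subsequence (fun k m n => forall g : Y -> K, Lip0_ball dY y0 g ->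
      abs (minus (phi m (fun x => g (f x))) (phi n (fun x => g (f x)))) <= / (INR k + 1)))
    as [D [HD HDC]].
  { intros tau k. apply (comp_uniformly_cauchy_subseq_le (fun n => phi (tau n))).
    - apply Rinv_0_lt_compat. pose proof (pos_INR k). lra.
    - intros n. split; apply Hphi. }
  exists D. split; [exact HD |]. intros eps Heps.
  destruct (archimed_cor1 eps Heps) as [N [HN HN0]].
  exists N. intros a b Ha Hb g Hg. eapply Rle_trans; [apply (HDC N a b Ha Hb g Hg) |].
  apply Rlt_le, Rle_lt_trans with (/ INR N); [| exact HN].
  apply Rinv_le_contravar; [apply lt_0_INR; exact HN0 | lra].
Qed.

Context (T : functional K X -> functional K Y).
Hypothesis HT : bounded_linear_free dX x0 dY y0 T.
Hypothesis HTd : forall x, feq dY y0 (T (delta x)) (delta (f x)).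

Lemma T_zero (g : Y -> K) : Lip0 dY y0 g -> T (fun _ => zero) g = zero.
Proof.
  intros Hg. destruct HT as [Hmap [_ [C HC]]].
  pose proof Hg as [_ [L0 HL0]]. destruct (lip_le_pos dY HmY g L0 HL0) as [L [HL HgL]].
  apply abs_eq_zero, Rle_antisym; [| apply abs_ge_0].
  replace 0 with (C * 0 * L) by ring.
  apply (abs_apply_le_of_lip K_abs_mult K_abs_onto dY y0); auto.
  - apply in_dual_homogeneous, Hmap, in_free_zero.
  - apply HC; [apply in_free_zero |]. intros h _. apply Req_le, abs_zero.
Qed.

Lemma T_lincomb (l : list (K * X)) (g : Y -> K) : Lip0 dY y0 g ->
  T (lincomb l) g = lincomb l (fun x => g (f x)).
Proof.
  intros Hg. destruct HT as [_ [Hlin _]].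
  induction l as [|[b x] l IH]; [apply T_zero, Hg |].
  change (T (fun h => plus (mult b (delta x h)) (lincomb l h)) g
          = plus (mult b (g (f x))) (lincomb l (fun x => g (f x)))).
  rewrite (Hlin b (delta x) (lincomb l)), HTd, IH by
    (exact Hg || apply in_free_delta || apply (in_free_lincomb K_mult_comm K_abs_mult)).
  reflexivity.
Qed.

(* [T] is the pre-adjoint of composition with [f]: true on finite combinations of Dirac
   functionals by [T_lincomb], hence on their closure since both sides are continuous. *)
Lemma T_apply_comp (phi : functional K X) (g : Y -> K) :
  in_free dX x0 phi -> Lip0 dY y0 g -> T phi g = phi (fun x => g (f x)).
Proof.
  intros Hphi Hg. pose proof HT as [Hmap [Hlin [C HC]]].
  pose proof Hg as [_ [Lg0 HLg0]]. destruct (lip_le_pos dY HmY g Lg0 HLg0) as [Lg [HLg HgL]].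
  assert (Hgf : lip_le dX (fun x => g (f x)) (Lg * (Lf + 1))).
  { apply (lip_le_mono dX HmX _ (Lg * Lf)); [apply lip_le_comp; [exact HgL | lra] | nra]. }
  apply (eq_of_abs_minus_le _ _ (C * Lg + Lg * (Lf + 1))). intros eps Heps.
  destruct (proj2 Hphi eps Heps) as [l Hl].
  pose proof (in_free_lincomb K_mult_comm K_abs_mult dX x0 l) as Hl_free.
  set (chi := fun h => plus (mult (opp one) (lincomb l h)) (phi h)).
  assert (Hchi_free : in_free dX x0 chi) by (apply (in_free_comb K_mult_comm K_abs_mult); auto).
  assert (Hchi : T chi g = minus (T phi g) (lincomb l (fun x => g (f x)))).
  { unfold chi. rewrite Hlin, T_lincomb, <- opp_mult_m1 by auto. apply (plus_opp_minus (G := K)). }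
  assert (Hchi_le : abs (T chi g) <= C * eps * Lg).
  { apply (abs_apply_le_of_lip K_abs_mult K_abs_onto dY y0); auto.
    - apply in_dual_homogeneous, Hmap, Hchi_free.
    - apply HC; [exact Hchi_free |]. intros h Hh. unfold chi.
      rewrite <- opp_mult_m1, (plus_opp_minus (G := K)). apply Hl, Hh. }
  assert (Happrox : abs (fdiff phi (lincomb l) (fun x => g (f x))) <= eps * (Lg * (Lf + 1))).
  { apply (abs_apply_le_of_lip K_abs_mult K_abs_onto dX x0); auto.
    - apply homogeneous_fdiff; apply in_dual_homogeneous; [apply Hphi | apply Hl_free].
    - apply Lip0_comp, Hg.
    - nra. }
  rewrite Hchi in Hchi_le. unfold fdiff in Happrox.
  eapply Rle_trans. apply (abs_minus_triangle _ (lincomb l (fun x => g (f x)))).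
  rewrite (abs_minus (lincomb l _)). nra.
Qed.

Theorem compact_operator_of_flat : compact_operator dX x0 dY y0 T.
Proof.
  intros phi Hphi.
  destruct (comp_uniformly_cauchy_subseq phi Hphi) as [D [HD HCauchy]].
  destruct (in_free_complete K_abs_mult K_abs_onto K_complete dY y0 HmY
              (fun n => T (phi (D n)))) as [psi [Hpsi Hlim]].
  - intros n. apply HT, Hphi.
  - intros eps Heps. destruct (HCauchy eps Heps) as [N HN]. exists N.
    intros m n Hm Hn g Hg. unfold fdiff.
    rewrite !T_apply_comp by (apply Hphi || apply Lip0_ball_Lip0, Hg).
    apply HN; assumption.
  - exists D, psi. split; [exact HD | split; assumption].
Qed.

End CompositionOperator.

Lemma R_abs_onto (r : R) : 0 < r -> exists a : R_AbsRing, abs a = r.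
Proof. intros Hr. exists r. apply Rabs_pos_eq. lra. Qed.

Lemma R_bounded_net (r eta : R) : 0 < eta -> exists zs : list R_AbsRing,
  forall z : R_AbsRing, abs z <= r -> exists w, In w zs /\ abs (minus z w) <= eta.
Proof.
  intros Heta. destruct (INR_unbounded (2 * r / eta)) as [n Hn].
  exists (map (fun k => - r + INR k * eta) (seq 0 n)).
  intros z Hz. apply Rabs_le_between in Hz.
  assert (Ht : 0 <= (z + r) / eta) by (apply Rdiv_le_0_compat; lra).
  destruct (nfloor_ex _ Ht) as [k [Hk1 Hk2]].
  assert (Htop : (z + r) / eta <= 2 * r / eta).
  { unfold Rdiv. apply Rmult_le_compat_r; [apply Rlt_le, Rinv_0_lt_compat |]; lra. }
  exists (- r + INR k * eta). split.
  - apply (in_map (fun k => - r + INR k * eta)), in_seq. split; [lia |]. cbn. apply INR_lt. lra.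
  - change (Rabs (z - (- r + INR k * eta)) <= eta). apply Rabs_le.
    assert (Hzr : z + r = (z + r) / eta * eta) by (field; lra).
    set (t := (z + r) / eta) in *. nra.
Qed.

Lemma R_complete_seq (u : nat -> R_AbsRing) :
  (forall eps, 0 < eps -> exists N, forall m n, (N <= m)%nat -> (N <= n)%nat ->
     abs (minus (u m) (u n)) <= eps) ->
  exists l, converges_to u l.
Proof.
  intros Hu. destruct (Rcomplete.R_complete u) as [l Hl].
  { intros eps He. destruct (Hu (eps / 2)) as [N HN]. lra. exists N. intros n m Hn Hm.
    pose proof (HN n m Hn Hm). unfold Rdist. change (Rabs (u n - u m) <= eps / 2) in H. lra. }
  exists l. intros eps He. destruct (Hl eps He) as [N HN]. exists N. intros n Hn.
  pose proof (HN n Hn). unfold Rdist in H. change (Rabs (u n - l) <= eps). lra.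
Qed.

Lemma C_abs_onto (r : R) : 0 < r -> exists a : C_AbsRing, abs a = r.
Proof.
  intros Hr. exists (RtoC r). change (Cmod (RtoC r) = r). rewrite Cmod_R. apply Rabs_pos_eq. lra.
Qed.

Lemma Cmod_le_of_components (x y e : R) : Rabs x <= e -> Rabs y <= e -> Cmod (x, y) <= 2 * e.
Proof.
  intros Hx Hy. eapply Rle_trans. apply Cmod_2Rmax. cbn.
  assert (Hsqrt : sqrt 2 <= 2).
  { rewrite <- (sqrt_square 2) at 2 by lra. apply sqrt_le_1_alt. lra. }
  pose proof (Rmax_lub _ _ _ Hx Hy). pose proof (Rmax_l (Rabs x) (Rabs y)).
  pose proof (Rabs_pos x). pose proof (sqrt_pos 2). nra.
Qed.

Lemma C_bounded_net (r eta : R) : 0 < eta -> exists zs : list C_AbsRing,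
  forall z : C_AbsRing, abs z <= r -> exists w, In w zs /\ abs (minus z w) <= eta.
Proof.
  intros Heta. destruct (R_bounded_net r (eta / 2)) as [xs Hxs]. lra.
  exists (flat_map (fun a => map (fun b => (a, b)) xs) xs).
  intros [x y] Hz. change (Cmod (x, y) <= r) in Hz.
  pose proof (Rmax_Cmod (x, y)) as Hm. cbn in Hm.
  pose proof (Rmax_l (Rabs x) (Rabs y)). pose proof (Rmax_r (Rabs x) (Rabs y)).
  destruct (Hxs x ltac:(change (Rabs x <= r); lra)) as [a [Ha Hxa]].
  destruct (Hxs y ltac:(change (Rabs y <= r); lra)) as [b [Hb Hyb]].
  exists (a, b). split.
  - apply in_flat_map. exists a. split; [exact Ha | apply in_map, Hb].
  - change (Cmod (x - a, y - b) <= eta). replace eta with (2 * (eta / 2)) by field.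
    apply Cmod_le_of_components; assumption.
Qed.

Lemma C_complete_seq (u : nat -> C_AbsRing) :
  (forall eps, 0 < eps -> exists N, forall m n, (N <= m)%nat -> (N <= n)%nat ->
     abs (minus (u m) (u n)) <= eps) ->
  exists l, converges_to u l.
Proof.
  intros Hu.
  assert (Hpart : forall p : C -> R, (forall z w : C, Rabs (p z - p w) <= Cmod (z - w)) ->
                    exists l, converges_to (K := R_AbsRing) (fun n => p (u n)) l).
  { intros p Hp. apply R_complete_seq. intros eps He. destruct (Hu eps He) as [N HN].
    exists N. intros m n Hm Hn. eapply Rle_trans; [apply Hp | apply (HN m n Hm Hn)]. }
  destruct (Hpart fst) as [lx Hx].
  { intros [a b] [c e]. pose proof (Rmax_Cmod ((a, b) - (c, e))%C). cbn in *.
    pose proof (Rmax_l (Rabs (a + - c)) (Rabs (b + - e))). unfold Rminus. lra. }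
  destruct (Hpart snd) as [ly Hy].
  { intros [a b] [c e]. pose proof (Rmax_Cmod ((a, b) - (c, e))%C). cbn in *.
    pose proof (Rmax_r (Rabs (a + - c)) (Rabs (b + - e))). unfold Rminus. lra. }
  exists (lx, ly). intros eps He.
  destruct (Hx (eps / 2)) as [N1 HN1]. lra. destruct (Hy (eps / 2)) as [N2 HN2]. lra.
  exists (N1 + N2)%nat. intros n Hn.
  specialize (HN1 n ltac:(lia)). specialize (HN2 n ltac:(lia)).
  change (Cmod (u n - (lx, ly)) <= eps). destruct (u n) as [a b].
  change (Cmod (a - lx, b - ly) <= eps). replace eps with (2 * (eps / 2)) by field.
  apply Cmod_le_of_components; assumption.
Qed.

Lemma lipschitz_map_nonneg {X Y : Type} (dX : X -> X -> R) (dY : Y -> Y -> R) (f : X -> Y) :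
  is_metric dX -> lipschitz_map dX dY f ->
  exists L, 0 <= L /\ forall x y, dY (f x) (f y) <= L * dX x y.
Proof.
  intros [Hnn _] [L HL]. exists (Rmax L 0). split; [apply Rmax_r |]. intros x y.
  eapply Rle_trans; [apply HL | apply Rmult_le_compat_r; [apply Hnn | apply Rmax_l]].
Qed.

Theorem corollary2p6 (K : AbsRing) (HK : K = R_AbsRing \/ K = C_AbsRing)
  (X Y : Type) (dX : X -> X -> R) (dY : Y -> Y -> R) (x0 : X) (y0 : Y)
  (HmX : is_metric dX) (HmY : is_metric dY)
  (HcX : is_complete dX) (HcY : is_complete dY)
  (f : X -> Y) (Hlip : lipschitz_map dX dY f) (Hf0 : f x0 = y0)
  (* (P1) images of bounded sets are totally bounded *)
  (HP1 : forall S : X -> Prop, (exists r, forall x, S x -> dX x x0 <= r) ->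
           forall eps, 0 < eps -> exists l : list Y,
             forall x, S x -> exists y, In y l /\ dY (f x) y <= eps)
  (* (P2) uniform local flatness *)
  (HP2 : forall eps, 0 < eps -> exists delta, 0 < delta /\
           forall x y, x <> y -> dX x y < delta -> dY (f x) (f y) <= eps * dX x y)
  (* (P4) flatness at infinity *)
  (HP4 : forall eps, 0 < eps -> exists Rad, 0 < Rad /\
           forall x y, x <> y -> Rad <= dX x x0 -> Rad <= dX y x0 ->
             dY (f x) (f y) <= eps * dX x y)
  (* f-hat : the bounded linear operator F(M) -> F(N) with f-hat(delta x) = delta (f x) *)
  (T : functional K X -> functional K Y)
  (HT : bounded_linear_free dX x0 dY y0 T)
  (HTd : forall x, feq dY y0 (T (delta x)) (delta (f x))) :
  compact_operator dX x0 dY y0 T.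
Proof.
  destruct (lipschitz_map_nonneg dX dY f HmX Hlip) as [L [HL0 HL]].
  destruct HK as [-> | ->].
  - exact (compact_operator_of_flat Rmult_comm Rabs_mult R_abs_onto R_bounded_net R_complete_seq
             dX dY x0 y0 HmX HmY f L HL0 HL Hf0 HP1 HP2 HP4 T HT HTd).
  - exact (compact_operator_of_flat Cmult_comm Cmod_mult C_abs_onto C_bounded_net C_complete_seq
             dX dY x0 y0 HmX HmY f L HL0 HL Hf0 HP1 HP2 HP4 T HT HTd).
Qed.
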